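(* Let $X$ be a finite-dimensional real Hilbert space and $A,B$ nonempty closed convex subsets with $A\cap B\ne\varnothing$. Let $L=\operatorname{aff}(A\cup B)$ and $T=P_BR_A+\mathrm{Id}-P_A$. Then: (a) $T^n=\mathrm{Id}-P_L+T^nP_L$ for all $n\in\mathbb N$; (b) $\mathrm{Id}-T=P_L-TP_L$. If in addition $\operatorname{ri}A\cap\operatorname{ri}B\ne\varnothing$, then (c) $P_{\operatorname{Fix}T}=\mathrm{Id}-P_L+P_{A\cap B}P_L$ and (d) $d_{\operatorname{Fix}T}=d_{A\cap B}\circ P_L$.
   Context: $P_S$ is the metric projection onto a closed convex set $S$, $R_S=2P_S-\mathrm{Id}$, $d_S$ the distance function, $\operatorname{aff}$ the affine hull, $\operatorname{ri}$ the relative interior, $T^0=\mathrm{Id}$. *)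

From mathcomp Require Import all_boot.
From Stdlib Require Import Reals List ClassicalEpsilon.
Set Implicit Arguments.
Unset Strict Implicit.
Unset Printing Implicit Defensive.
Local Open Scope R_scope.

Definition vec (n : nat) := 'I_n -> R.
Definition vzero {n} : vec n := fun _ => 0.
Definition vadd {n} (x y : vec n) : vec n := fun i => x i + y i.
Definition vopp {n} (x : vec n) : vec n := fun i => - x i.
Definition vsub {n} (x y : vec n) : vec n := fun i => x i - y i.
Definition vscale {n} (a : R) (x : vec n) : vec n := fun i => a * x i.
Definition inner {n} (x y : vec n) : R := \big[Rplus/0]_(i < n) (x i * y i).
Definition vnorm {n} (x : vec n) : R := sqrt (inner x x).

Definition vset n := vec n -> Prop.

Definition is_closed {n} (S : vset n) : Prop :=
  forall x, (forall eps, 0 < eps -> exists y, S y /\ vnorm (vsub x y) < eps) -> S x.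
Definition is_convex {n} (S : vset n) : Prop :=
  forall x y t, S x -> S y -> 0 <= t <= 1 ->
    S (vadd (vscale t x) (vscale (1 - t) y)).
Definition is_nonempty {n} (S : vset n) : Prop := exists x, S x.
Definition set_inter {n} (A B : vset n) : vset n := fun x => A x /\ B x.
Definition set_union {n} (A B : vset n) : vset n := fun x => A x \/ B x.

Definition is_proj {n} (S : vset n) (x p : vec n) : Prop :=
  S p /\ forall y, S y -> vnorm (vsub x p) <= vnorm (vsub x y).
(* metric projection P_S (well defined for is_nonempty closed is_convex S) *)
Definition proj {n} (S : vset n) (x : vec n) : vec n :=
  epsilon (inhabits vzero) (fun p => is_proj S x p).
Definition refl {n} (S : vset n) (x : vec n) : vec n :=
  vsub (vscale 2 (proj S x)) x.

Definition is_inf (E : R -> Prop) (m : R) : Prop :=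
  (forall r, E r -> m <= r) /\ (forall b, (forall r, E r -> b <= r) -> b <= m).
Definition dist_fun {n} (S : vset n) (x : vec n) : R :=
  epsilon (inhabits 0) (is_inf (fun r => exists y, S y /\ r = vnorm (vsub x y))).

Definition aff_hull {n} (S : vset n) : vset n := fun x =>
  exists l : list (R * vec n),
    List.Forall (fun p => S (snd p)) l /\
    List.fold_right (fun p s => fst p + s) 0 l = 1 /\
    x = List.fold_right (fun p v => vadd (vscale (fst p) (snd p)) v) vzero l.

Definition rel_int {n} (S : vset n) : vset n := fun x =>
  S x /\ exists eps, 0 < eps /\
    forall y, aff_hull S y -> vnorm (vsub y x) < eps -> S y.

Definition Fix {n} (T : vec n -> vec n) : vset n := fun x => T x = x.

Definition iter_fun {n} (k : nat) (T : vec n -> vec n) : vec n -> vec n :=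
  fun x => Nat.iter k T x.

Definition DR_op {n} (A B : vset n) (x : vec n) : vec n :=
  vsub (vadd (proj B (refl A x)) x) (proj A x).

(* Put u := x - P_L x; it is orthogonal to every difference of points of A ∪ B.
   Translating by such a vector commutes with P_A and P_B, hence T (y + u) = T y + u,
   which gives (a) and (b).  If z ∈ ri A ∩ ri B and T x = x, then a := P_A x = P_B (R_A x)
   lies in A ∩ B, and the variational inequalities of the two projections, tested at the
   relative interior point z, force x - a ⊥ A ∪ B; conversely every c + u with c ∈ A ∩ B
   and u ⊥ A ∪ B is fixed.  So Fix T = (A ∩ B) + (L - L)^⊥, and since A ∩ B ⊆ L the
   projection onto this orthogonal sum splits as x - P_L x + P_{A∩B} (P_L x), which is (c);
   (d) follows by taking norms.
   Projections onto closed convex sets exist by a minimizing sequence, Cauchy by the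
   parallelogram law; the projection onto L is built from a maximal orthonormal family of
   directions of L, which has at most n members by Bessel's inequality. *)

From HB Require Import structures.
From mathcomp Require Import all_boot.
From Stdlib Require Import Reals Lra Lia Psatz List.
From Stdlib Require Import Classical ClassicalEpsilon FunctionalExtensionality PropExtensionality.
Set Implicit Arguments.
Unset Strict Implicit.
Local Open Scope R_scope.

HB.instance Definition _ := Monoid.isComLaw.Build R 0 Rplus
  (fun x y z => esym (Rplus_assoc x y z)) Rplus_comm Rplus_0_l.

Lemma vec_ext {n} (x y : vec n) : (forall i, x i = y i) -> x = y.
Proof. exact: functional_extensionality. Qed.

Ltac vec_ring := apply: vec_ext => ?; rewrite /vadd /vsub /vscale /vopp /vzero; field.

Section InnerProduct.
Context {n : nat}.
Implicit Types (x y z u v w : vec n).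

Lemma inner_addl x y z : inner (vadd x y) z = inner x z + inner y z.
Proof. by rewrite /inner; elim/big_rec3: _ => [|i a b c _ ->]; rewrite /vadd; ring. Qed.

Lemma inner_subl x y z : inner (vsub x y) z = inner x z - inner y z.
Proof. by rewrite /inner; elim/big_rec3: _ => [|i a b c _ ->]; rewrite /vsub; ring. Qed.

Lemma inner_scalel a x z : inner (vscale a x) z = a * inner x z.
Proof. by rewrite /inner; elim/big_rec2: _ => [|i b c _ ->]; rewrite /vscale; ring. Qed.

Lemma inner_oppl x z : inner (vopp x) z = - inner x z.
Proof. by rewrite /inner; elim/big_rec2: _ => [|i b c _ ->]; rewrite /vopp; ring. Qed.

Lemma inner0l z : inner vzero z = 0.
Proof. by rewrite /inner; elim/big_rec: _ => [|i b _ ->]; rewrite /vzero; ring. Qed.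

Lemma inner_sym x y : inner x y = inner y x.
Proof. by rewrite /inner; elim/big_rec2: _ => [|i b c _ ->]; ring. Qed.

Lemma inner_addr x y z : inner z (vadd x y) = inner z x + inner z y.
Proof. by rewrite !(inner_sym z) inner_addl. Qed.

Lemma inner_subr x y z : inner z (vsub x y) = inner z x - inner z y.
Proof. by rewrite !(inner_sym z) inner_subl. Qed.

Lemma inner_scaler a x z : inner z (vscale a x) = a * inner z x.
Proof. by rewrite !(inner_sym z) inner_scalel. Qed.

Lemma inner0r z : inner z vzero = 0.
Proof. by rewrite inner_sym inner0l. Qed.

Lemma inner_sub_sub x y : inner (vsub x y) (vsub x y) = inner x x - 2 * inner x y + inner y y.
Proof. rewrite !inner_subl !inner_subr (inner_sym y x); ring. Qed.

Lemma inner_add_add x y : inner (vadd x y) (vadd x y) = inner x x + 2 * inner x y + inner y y.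
Proof. rewrite !inner_addl !inner_addr (inner_sym y x); ring. Qed.

Lemma sum_ge_term (F : 'I_n -> R) j :
  (forall i, 0 <= F i) -> F j <= \big[Rplus/0]_(i < n) F i.
Proof.
move=> F_ge0; rewrite (bigD1 j) //=.
set rest := \big[_/_]_(i < n | _) _.
have rest_ge0 : 0 <= rest.
  by apply: big_ind; [lra | move=> *; lra | move=> i _; exact: F_ge0].
by rewrite -[X in X <= _]Rplus_0_r; apply: Rplus_le_compat_l.
Qed.

Lemma sum_le_const (F : 'I_n -> R) c :
  (forall i, F i <= c) -> \big[Rplus/0]_(i < n) F i <= INR n * c.
Proof.
move=> F_le; apply: (Rle_trans _ (\big[Rplus/0]_(i < n) c)).
  by apply: (big_ind2 (fun a b => a <= b)); [lra | move=> *; lra | move=> i _; exact: F_le].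
rewrite big_const_ord; suff -> : forall k, iter k (Rplus c) 0 = INR k * c by lra.
by elim=> [|k IH]; rewrite ?iterS ?IH ?S_INR /=; ring.
Qed.

Lemma coord_sq_le x i : x i * x i <= inner x x.
Proof. by apply: (@sum_ge_term (fun j => x j * x j)) => j; nra. Qed.

Lemma inner_ge0 x : 0 <= inner x x.
Proof. by apply: big_ind; [lra | move=> *; lra | move=> i _; nra]. Qed.

Lemma inner_eq0 x : inner x x = 0 -> x = vzero.
Proof. by move=> x0; apply: vec_ext => i; have := coord_sq_le x i; rewrite /vzero; nra. Qed.

Lemma vnorm_le_sq x y : vnorm x <= vnorm y <-> inner x x <= inner y y.
Proof.
rewrite /vnorm; split => le_xy; first exact: sqrt_le_0 (inner_ge0 x) (inner_ge0 y) le_xy.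
exact: sqrt_le_1_alt.
Qed.

Lemma vnorm_scale a x : vnorm (vscale a x) = Rabs a * vnorm x.
Proof.
rewrite /vnorm inner_scalel inner_scaler -Rmult_assoc sqrt_mult; [|nra|exact: inner_ge0].
by rewrite -[a * a]/(Rsqr a) sqrt_Rsqr_abs.
Qed.

Lemma vnorm_lt_of_sq x e : 0 < e -> inner x x < e * e -> vnorm x < e.
Proof.
move=> e_gt0 lt_xe; rewrite /vnorm -(sqrt_square e); last lra.
by apply: sqrt_lt_1_alt; split; [exact: inner_ge0 | ].
Qed.

End InnerProduct.

Lemma nonpos_of_quadratic_bound g N :
  0 <= N -> (forall t, 0 < t <= 1 -> 2 * t * g <= t * t * N) -> g <= 0.
Proof.
move=> N_ge0 bound; apply: Rnot_lt_le => g_gt0.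
pose t := g / (N + g).
have t_gt0 : 0 < t by apply: Rdiv_lt_0_compat; lra.
have t_def : t * (N + g) = g by rewrite /t; field; lra.
have t_le1 : t <= 1 by nra.
have := bound t (conj t_gt0 t_le1); nra.
Qed.

Section NearestPoint.
Context {n : nat}.
Implicit Types (x y p q s d : vec n) (S : vset n).

Lemma is_proj_dir S x p d :
  is_proj S x p -> (forall t, 0 < t <= 1 -> S (vadd p (vscale t d))) ->
  inner (vsub x p) d <= 0.
Proof.
move=> [_ p_min] Sd; apply: (nonpos_of_quadratic_bound (inner_ge0 d)) => t t01.
have /vnorm_le_sq := p_min _ (Sd t t01).
have -> : vsub x (vadd p (vscale t d)) = vsub (vsub x p) (vscale t d) by vec_ring.
by rewrite (inner_sub_sub (vsub x p)) !inner_scaler inner_scalel; lra.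
Qed.

Lemma is_proj_var S x p :
  is_convex S -> is_proj S x p -> forall s, S s -> inner (vsub x p) (vsub s p) <= 0.
Proof.
move=> S_cvx x_p s Ss; apply: (is_proj_dir x_p) => t t01.
have -> : vadd p (vscale t (vsub s p)) = vadd (vscale t s) (vscale (1 - t) p) by vec_ring.
by apply: S_cvx => //; [case: x_p | lra].
Qed.

Lemma is_proj_of_var S x p :
  S p -> (forall s, S s -> inner (vsub x p) (vsub s p) <= 0) -> is_proj S x p.
Proof.
move=> Sp var; split => // y Sy; apply/vnorm_le_sq.
have -> : vsub x y = vsub (vsub x p) (vsub y p) by vec_ring.
by rewrite (inner_sub_sub (vsub x p)); have := var y Sy; have := inner_ge0 (vsub y p); lra.
Qed.

Lemma is_proj_unique S x p q : is_convex S -> is_proj S x p -> is_proj S x q -> p = q.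
Proof.
move=> S_cvx x_p x_q.
have var_p := is_proj_var S_cvx x_p (proj1 x_q).
have var_q := is_proj_var S_cvx x_q (proj1 x_p).
have sq_qp : inner (vsub q p) (vsub q p) =
              inner (vsub x p) (vsub q p) + inner (vsub x q) (vsub p q).
  rewrite !inner_subl !inner_subr (inner_sym q p); ring.
have /inner_eq0 qp0 : inner (vsub q p) (vsub q p) = 0 by have := inner_ge0 (vsub q p); lra.
by apply: vec_ext => i; have := f_equal (fun v => v i) qp0; rewrite /vsub /vzero; lra.
Qed.

Lemma is_proj_proj S x : (exists p, is_proj S x p) -> is_proj S x (proj S x).
Proof. exact: epsilon_spec. Qed.

Lemma proj_unique S x p : is_convex S -> is_proj S x p -> proj S x = p.
Proof. by move=> S_cvx x_p; apply: is_proj_unique S_cvx (is_proj_proj (ex_intro _ p x_p)) x_p. Qed.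

Lemma dist_fun_is_proj S x p : is_proj S x p -> dist_fun S x = vnorm (vsub x p).
Proof.
move=> [Sp p_min].
set E := fun r => exists y, S y /\ r = vnorm (vsub x y).
have inf_p : is_inf E (vnorm (vsub x p)).
  by split=> [r [y [Sy ->]]|b lb]; [exact: p_min | apply: lb; exists p].
have [lb_d glb_d] := epsilon_spec (inhabits 0) (is_inf E) (ex_intro _ _ inf_p).
apply: Rle_antisym; first by apply: lb_d; exists p.
exact: glb_d (proj1 inf_p).
Qed.

End NearestPoint.

Lemma inf_approx (E : R -> Prop) :
  (exists r, E r) -> (forall r, E r -> 0 <= r) ->
  exists m, (forall r, E r -> m <= r) /\ forall e, 0 < e -> exists r, E r /\ r < m + e.
Proof.
move=> E_ne E_ge0; pose F r := E (- r).
have F_ub : bound F by exists 0 => r /E_ge0; lra.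
have F_ne : exists r, F r by case: E_ne => r Er; exists (- r); rewrite /F Ropp_involutive.
have [m [m_ub m_lub]] := completeness F F_ub F_ne.
exists (- m); split=> [r Er | e e_gt0].
  by have := m_ub (- r); rewrite /F Ropp_involutive => /(_ Er); lra.
apply: NNPP => no_r; suff : m <= m - e by lra.
apply: m_lub => r Fr; apply: Rnot_lt_le => lt_r; apply: no_r.
by exists (- r); split => //; lra.
Qed.

Definition inv_succ (k : nat) : R := / INR k.+1.

Lemma inv_succ_gt0 k : 0 < inv_succ k.
Proof. by apply: Rinv_0_lt_compat; apply: lt_0_INR; lia. Qed.

Lemma inv_succ_le1 k : inv_succ k <= 1.
Proof. by rewrite /inv_succ -Rinv_1 S_INR; apply: Rinv_le_contravar; have := pos_INR k; lra. Qed.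

Lemma inv_succ_anti k j : (k <= j)%nat -> inv_succ j <= inv_succ k.
Proof.
move=> /leP le_kj; apply: Rinv_le_contravar; first by apply: lt_0_INR; lia.
by apply: le_INR; lia.
Qed.

Lemma inv_succ_lt e : 0 < e -> exists k, inv_succ k < e.
Proof.
move=> /archimed_cor1 [N [lt_e N_gt0]]; exists N.-1.
by rewrite /inv_succ prednK //; apply/ltP.
Qed.

Lemma inv_succ_mul_lt e C : 0 < e -> 0 < C -> exists k, inv_succ k * C < e.
Proof.
move=> e_gt0 C_gt0; have [|k lt_k] := @inv_succ_lt (e / C); first exact: Rdiv_lt_0_compat.
exists k; rewrite [X in _ < X](_ : e = e / C * C); last by field; lra.
exact: Rmult_lt_compat_r.
Qed.

Section ProjectionExistence.
Context {n : nat}.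
Implicit Types (x y z a b : vec n) (S : vset n).

Lemma vec_cauchy_limit (y : nat -> vec n) :
  (forall j k, (k <= j)%nat ->
     inner (vsub (y j) (y k)) (vsub (y j) (y k)) <= inv_succ k * inv_succ k) ->
  exists l, forall k, inner (vsub l (y k)) (vsub l (y k)) <= INR n * (inv_succ k * inv_succ k).
Proof.
move=> cauchy_y.
have coord_close i j k : (k <= j)%nat -> Rabs (y j i - y k i) <= inv_succ k.
  move=> le_kj; rewrite -[inv_succ k]Rabs_pos_eq; last exact/Rlt_le/inv_succ_gt0.
  apply: Rsqr_le_abs_0; rewrite /Rsqr.
  exact: Rle_trans (coord_sq_le (vsub (y j) (y k)) i) (cauchy_y j k le_kj).
have coord_cauchy i : Cauchy_crit (fun k => y k i).
  move=> e e_gt0; have [N lt_Ne] := inv_succ_lt e_gt0.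
  exists N => j k /leP le_Nj /leP le_Nk; rewrite /Rdist.
  case/orP: (leq_total k j) => [le_kj | le_jk].
    by have := coord_close i _ _ le_kj; have := inv_succ_anti le_Nk; lra.
  by rewrite Rabs_minus_sym; have := coord_close i _ _ le_jk; have := inv_succ_anti le_Nj; lra.
exists (fun i => proj1_sig (R_complete _ (coord_cauchy i))) => k.
apply: sum_le_const => i; rewrite /vsub.
case: (R_complete _ _) => /= l_i lim_i.
suff close : Rabs (l_i - y k i) <= Rabs (inv_succ k) by exact: Rsqr_le_abs_1.
rewrite [Rabs (inv_succ k)]Rabs_pos_eq; last exact/Rlt_le/inv_succ_gt0.
apply: Rle_plus_epsilon => e /lim_i [N close_N].
have le_k := leq_maxr N k; have /leP le_N := leq_maxl N k.
have := close_N _ le_N; have := coord_close i _ _ le_k; rewrite /Rdist.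
set m := maxn N k => close_mk close_ml.
have -> : l_i - y k i = (l_i - y m i) + (y m i - y k i) by ring.
by apply: Rle_trans (Rabs_triang _ _) _; rewrite Rabs_minus_sym; lra.
Qed.

Lemma parallelogram_midpoint x y z :
  inner (vsub y z) (vsub y z) =
  2 * inner (vsub x y) (vsub x y) + 2 * inner (vsub x z) (vsub x z)
  - 4 * inner (vsub x (vadd (vscale (1 / 2) y) (vscale (1 - 1 / 2) z)))
              (vsub x (vadd (vscale (1 / 2) y) (vscale (1 - 1 / 2) z))).
Proof.
rewrite !inner_subl !inner_subr !inner_addl !inner_addr !inner_scalel !inner_scaler.
rewrite (inner_sym y x) (inner_sym z x) (inner_sym z y); field.
Qed.

Lemma inner_sub_sub_le a b t :
  0 < t -> inner (vsub a b) (vsub a b) <= (1 + t) * inner a a + (1 + / t) * inner b b.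
Proof.
move=> t_gt0; have := inner_ge0 (vadd (vscale t a) b).
rewrite inner_add_add inner_sub_sub !inner_scalel !inner_scaler => sq_ge0.
apply: (Rmult_le_reg_l t) => //.
have -> : t * ((1 + t) * inner a a + (1 + / t) * inner b b)
        = t * inner a a + t * t * inner a a + inner b b + t * inner b b by field; lra.
by have := inner_ge0 a; have := inner_ge0 b; nra.
Qed.

Lemma sqdist_inf_approx S x : is_nonempty S ->
  exists d, (forall y, S y -> d <= inner (vsub x y) (vsub x y)) /\
    forall e, 0 < e -> exists y, S y /\ inner (vsub x y) (vsub x y) < d + e.
Proof.
move=> [s0 Ss0].
have [||d [d_lb d_approx]] :=
  @inf_approx (fun r => exists y, S y /\ r = inner (vsub x y) (vsub x y)).
- by exists (inner (vsub x s0) (vsub x s0)), s0.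
- by move=> r [y [_ ->]]; exact: inner_ge0.
exists d; split=> [y Sy | e /d_approx [_ [[y [Sy ->]] lt_y]]]; last by exists y.
by apply: d_lb; exists y.
Qed.

Lemma minimizing_seq_cauchy S x d (y : nat -> vec n) :
  is_convex S -> (forall z, S z -> d <= inner (vsub x z) (vsub x z)) ->
  (forall k, S (y k) /\ inner (vsub x (y k)) (vsub x (y k)) < d + inv_succ k * inv_succ k / 4) ->
  forall j k, (k <= j)%nat ->
    inner (vsub (y j) (y k)) (vsub (y j) (y k)) <= inv_succ k * inv_succ k.
Proof.
move=> S_cvx d_lb y_min j k le_kj; have [Syj lt_j] := y_min j; have [Syk lt_k] := y_min k.
have := d_lb _ (S_cvx _ _ (1 / 2) Syj Syk ltac:(lra)).
have : inv_succ j * inv_succ j <= inv_succ k * inv_succ k.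
  by have := inv_succ_anti le_kj; have := inv_succ_gt0 j; nra.
by move: lt_j lt_k; rewrite (parallelogram_midpoint x (y j) (y k)); lra.
Qed.

Lemma closed_seq_limit S (y : nat -> vec n) l :
  is_closed S -> (forall k, S (y k)) ->
  (forall k, inner (vsub l (y k)) (vsub l (y k)) <= INR n * (inv_succ k * inv_succ k)) -> S l.
Proof.
move=> S_cl Sy l_close; apply: S_cl => e e_gt0.
have n_ge0 := pos_INR n.
have [|k lt_k] := @inv_succ_mul_lt e (INR n + 1) e_gt0; first lra.
exists (y k); split => //; apply: vnorm_lt_of_sq => //; apply: Rle_lt_trans (l_close k) _.
have ek_gt0 := inv_succ_gt0 k.
have a_ge0 : 0 <= inv_succ k * (INR n + 1) by nra.
have : inv_succ k * (INR n + 1) * (inv_succ k * (INR n + 1)) < e * e.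
  exact: Rmult_le_0_lt_compat.
by nra.
Qed.

Lemma minimizing_seq_limit_le x d (y : nat -> vec n) l :
  (forall k, inner (vsub x (y k)) (vsub x (y k)) < d + inv_succ k * inv_succ k / 4) ->
  (forall k, inner (vsub l (y k)) (vsub l (y k)) <= INR n * (inv_succ k * inv_succ k)) ->
  inner (vsub x l) (vsub x l) <= d.
Proof.
move=> y_min l_close; apply: Rle_plus_epsilon => e e_gt0.
pose C := Rabs d + 1 + 2 * INR n.
have [|k lt_k] := @inv_succ_mul_lt e C e_gt0.
  by rewrite /C; have := Rabs_pos d; have := pos_INR n; lra.
set t := inv_succ k in lt_k.
have t_gt0 : 0 < t := inv_succ_gt0 k.
have t_le1 : t <= 1 := inv_succ_le1 k.
have near_yk := y_min k; have l_yk := l_close k; rewrite -/t in near_yk l_yk.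
rewrite (_ : vsub x l = vsub (vsub x (y k)) (vsub l (y k))); last vec_ring.
apply: Rle_trans (inner_sub_sub_le _ _ t_gt0) _.
have b_bound : / t * inner (vsub l (y k)) (vsub l (y k)) <= INR n * t.
  by apply: (Rmult_le_reg_l t) => //; rewrite -Rmult_assoc Rinv_r; nra.
have a_bound : (1 + t) * inner (vsub x (y k)) (vsub x (y k)) <= d + t * Rabs d + t / 2.
  have := Rle_abs d; have : t * t <= t by nra.
  have : t * (t * t) <= t by nra.
  by nra.
by have := inner_ge0 (vsub l (y k)); rewrite /C in lt_k; nra.
Qed.

Lemma proj_exists S x :
  is_nonempty S -> is_closed S -> is_convex S -> exists p, is_proj S x p.
Proof.
move=> S_ne S_cl S_cvx; have [d [d_lb d_approx]] := sqdist_inf_approx x S_ne.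
have [y y_min] : exists y : nat -> vec n, forall k,
    S (y k) /\ inner (vsub x (y k)) (vsub x (y k)) < d + inv_succ k * inv_succ k / 4.
  apply: (choice (fun k yk =>
    S yk /\ inner (vsub x yk) (vsub x yk) < d + inv_succ k * inv_succ k / 4)) => k.
  apply: d_approx.
  by have := inv_succ_gt0 k; nra.
have [l l_close] := vec_cauchy_limit (minimizing_seq_cauchy S_cvx d_lb y_min).
exists l; split=> [|z Sz]; first exact: closed_seq_limit S_cl (fun k => proj1 (y_min k)) l_close.
apply/vnorm_le_sq; apply: Rle_trans (d_lb z Sz).
exact: minimizing_seq_limit_le (fun k => proj2 (y_min k)) l_close.
Qed.

End ProjectionExistence.

Lemma eq_big_In (A : Type) (E : list A) (F G : A -> R) :
  (forall e, In e E -> F e = G e) ->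
  \big[Rplus/0]_(e <- E) F e = \big[Rplus/0]_(e <- E) G e.
Proof.
elim: E => [|e E IH] FG; rewrite ?big_nil ?big_cons //.
by rewrite FG ?IH //= => [e' E_e'|]; [apply: FG; right | left].
Qed.

Section Orthonormal.
Context {n : nat}.
Implicit Types (v w e : vec n) (E : list (vec n)).

Fixpoint orthonormal E : Prop :=
  match E with
  | nil => True
  | e :: E' => inner e e = 1 /\ Forall (fun f => inner e f = 0) E' /\ orthonormal E'
  end.

Definition span_proj E v : vec n :=
  fold_right (fun e acc => vadd (vscale (inner v e) e) acc) vzero E.

Lemma inner_span_proj E v w :
  inner w (span_proj E v) = \big[Rplus/0]_(e <- E) (inner v e * inner w e).
Proof.
elim: E => [|e E IH] /=; first by rewrite big_nil inner0r.
by rewrite big_cons inner_addr inner_scaler IH.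
Qed.

Lemma span_proj_orth E v w : Forall (fun e => inner w e = 0) E -> inner w (span_proj E v) = 0.
Proof.
elim=> [|e E' we0 _ IH] /=; first exact: inner0r.
by rewrite inner_addr inner_scaler we0 IH; ring.
Qed.

Lemma inner_span_proj_mem E e v : orthonormal E -> In e E -> inner e (span_proj E v) = inner v e.
Proof.
elim: E => [|e0 E IH] //= [e0_unit [e0_orth E_on]] [<-|E_e].
  by rewrite inner_addr inner_scaler e0_unit span_proj_orth //; ring.
rewrite inner_addr inner_scaler IH // (inner_sym e e0).
by move/Forall_forall: e0_orth => ->; [ring|].
Qed.

Lemma bessel E v : orthonormal E -> \big[Rplus/0]_(e <- E) (inner v e * inner v e) <= inner v v.
Proof.
move=> E_on; have := inner_ge0 (vsub v (span_proj E v)).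
rewrite inner_sub_sub !inner_span_proj.
rewrite (@eq_big_In _ _ (fun e => inner v e * inner (span_proj E v) e)
                        (fun e => inner v e * inner v e)); first lra.
by move=> e E_e; rewrite (inner_sym (span_proj E v)) inner_span_proj_mem.
Qed.

Lemma orthonormal_unit E e : orthonormal E -> In e E -> inner e e = 1.
Proof. by elim: E => [|e0 E IH] //= [e0_unit [_ E_on]] [<-|/IH]; auto. Qed.

Definition unit_vec (j : 'I_n) : vec n := fun i => if i == j then 1 else 0.

Lemma inner_unit_vec j v : inner (unit_vec j) v = v j.
Proof.
rewrite /inner (bigD1 j) //= big1 => [|i /negbTE j_i]; rewrite /unit_vec ?eqxx ?j_i /=; ring.
Qed.

Lemma orthonormal_size E : orthonormal E -> (size E <= n)%nat.
Proof.
(* size E = Σ_e Σ_j <δ_j, e>² = Σ_j Σ_e <δ_j, e>² ≤ Σ_j |δ_j|² = n by Bessel. *)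
move=> E_on; apply/leP/INR_le.
have -> : INR (size E) = \big[Rplus/0]_(e <- E) \big[Rplus/0]_(j < n)
                            (inner (unit_vec j) e * inner (unit_vec j) e).
  rewrite -(@eq_big_In _ _ (fun _ => 1)) => [|e E_e].
    elim: {E_on} E => [|e E IH]; first by rewrite big_nil.
    by rewrite big_cons -IH; change (size (e :: E)) with (S (size E)); rewrite S_INR; ring.
  by rewrite -(orthonormal_unit E_on E_e); apply: eq_bigr => j _; rewrite inner_unit_vec.
rewrite exchange_big -[INR n]Rmult_1_r; apply: sum_le_const => j.
by apply: Rle_trans (bessel _ E_on) _; rewrite inner_unit_vec /unit_vec eqxx; lra.
Qed.

End Orthonormal.

Section AffineHull.
Context {n : nat}.
Implicit Types (x l p q s a b d u v w : vec n) (S : vset n) (E : list (vec n)).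

Definition perp S w : Prop := forall a b, S a -> S b -> inner w (vsub a b) = 0.

Lemma perp_lin S u v (c1 c2 : R) :
  perp S u -> perp S v -> perp S (vadd (vscale c1 u) (vscale c2 v)).
Proof. by move=> Su Sv x y Sx Sy; rewrite inner_addl !inner_scalel Su // Sv //; ring. Qed.

Lemma perp_opp S u : perp S u -> perp S (vopp u).
Proof. by move=> Su x y Sx Sy; rewrite inner_oppl Su //; ring. Qed.

Lemma perp_sub S u v : perp S u -> perp S v -> perp S (vsub u v).
Proof. by move=> Su Sv x y Sx Sy; rewrite inner_subl Su // Sv //; ring. Qed.

Lemma perp_union_l (A B : vset n) u : perp (set_union A B) u -> perp A u.
Proof. by move=> AB_u a b Aa Ab; apply: AB_u; left. Qed.

Lemma perp_union_r (A B : vset n) u : perp (set_union A B) u -> perp B u.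
Proof. by move=> AB_u a b Ba Bb; apply: AB_u; right. Qed.

Lemma aff_hull_sub S s : S s -> aff_hull S s.
Proof. by move=> Ss; exists ((1, s) :: nil); split; [constructor|split => /=; [ring|vec_ring]]. Qed.

Lemma aff_hull_add_dir S l a b t :
  aff_hull S l -> S a -> S b -> aff_hull S (vadd l (vscale t (vsub a b))).
Proof.
move=> [ls [S_ls [sum1 ->]]] Sa Sb; exists ((t, a) :: (- t, b) :: ls) => /=.
by split; [repeat constructor | split; [lra | vec_ring]].
Qed.

Lemma perp_aff_hull S w : is_nonempty S -> perp S w -> perp (aff_hull S) w.
Proof.
move=> [s Ss] Sw.
suff inner_aff l : aff_hull S l -> inner w l = inner w s.
  by move=> l l' /inner_aff wl /inner_aff wl'; rewrite inner_subr wl wl'; ring.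
move=> [ls [S_ls [sum1 ->]]]; rewrite -[inner w s]Rmult_1_l -sum1.
elim: S_ls {sum1} => [|[c a] ls' /= Sa _ IH] /=; first by rewrite inner0r; ring.
by rewrite inner_addr inner_scaler IH; have := Sw a s Sa Ss; rewrite inner_subr; nra.
Qed.

Definition aff_dir S d : Prop :=
  forall l t, aff_hull S l -> aff_hull S (vadd l (vscale t d)).

Lemma aff_dir_sub_points S a b : S a -> S b -> aff_dir S (vsub a b).
Proof. by move=> Sa Sb l t Sl; apply: aff_hull_add_dir. Qed.

Lemma aff_dir0 S : aff_dir S vzero.
Proof. by move=> l t; rewrite (_ : vadd l _ = l) //; vec_ring. Qed.

Lemma aff_dir_add S d1 d2 : aff_dir S d1 -> aff_dir S d2 -> aff_dir S (vadd d1 d2).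
Proof.
move=> S_d1 S_d2 l t Sl.
have -> : vadd l (vscale t (vadd d1 d2)) = vadd (vadd l (vscale t d1)) (vscale t d2) by vec_ring.
exact/S_d2/S_d1.
Qed.

Lemma aff_dir_scale S d (c : R) : aff_dir S d -> aff_dir S (vscale c d).
Proof.
move=> S_d l t Sl.
by rewrite (_ : vadd l _ = vadd l (vscale (t * c) d)); [exact: S_d | vec_ring].
Qed.

Lemma aff_dir_vsub S d1 d2 : aff_dir S d1 -> aff_dir S d2 -> aff_dir S (vsub d1 d2).
Proof.
move=> S_d1 S_d2; rewrite (_ : vsub d1 d2 = vadd d1 (vscale (-1) d2)); last vec_ring.
exact/aff_dir_add/aff_dir_scale.
Qed.

Lemma aff_dir_span_proj S E v : Forall (aff_dir S) E -> aff_dir S (span_proj E v).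
Proof.
elim=> [|e E' S_e _ IH] /=; first exact: aff_dir0.
exact/aff_dir_add/IH/aff_dir_scale.
Qed.

Definition spans_aff_dir S E : Prop := forall v, aff_dir S v -> v = span_proj E v.

Lemma orthonormal_extend S E :
  orthonormal E -> Forall (aff_dir S) E -> ~ spans_aff_dir S E ->
  exists e, orthonormal (e :: E) /\ aff_dir S e.
Proof.
move=> E_on S_E not_span.
have [v not_v] := not_all_ex_not _ _ not_span.
have [S_v v_out] := imply_to_and _ _ not_v.
pose w := vsub v (span_proj E v).
have w_orth : Forall (fun f => inner w f = 0) E.
  apply/Forall_forall => f E_f.
  by rewrite inner_subl (inner_sym (span_proj E v) f) inner_span_proj_mem //; ring.
have w_pos : 0 < inner w w.
  case: (Rle_lt_or_eq_dec _ _ (inner_ge0 w)) => // /esym /inner_eq0 w0; exfalso; apply: v_out.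
  by apply: vec_ext => i; have := f_equal (fun u => u i) w0; rewrite /w /vsub /vzero; lra.
pose c := / sqrt (inner w w).
have c_norm : c * c * inner w w = 1.
  by rewrite /c -Rinv_mult sqrt_sqrt; [field|]; lra.
exists (vscale c w); split; last exact/aff_dir_scale/aff_dir_vsub/aff_dir_span_proj.
split; first by rewrite inner_scalel inner_scaler; lra.
split=> //; apply/Forall_forall => f E_f.
by move/Forall_forall: w_orth => /(_ f E_f); rewrite inner_scalel => ->; ring.
Qed.

Lemma aff_dir_orthonormal_basis S :
  exists E, orthonormal E /\ Forall (aff_dir S) E /\ spans_aff_dir S E.
Proof.
(* [m] bounds the number of extensions still possible, by [orthonormal_size]. *)
suff build m E : (n <= size E + m)%nat -> orthonormal E -> Forall (aff_dir S) E ->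
    exists E', orthonormal E' /\ Forall (aff_dir S) E' /\ spans_aff_dir S E'.
  exact: (build n nil).
elim: m E => [|m IH] E le_n E_on S_E;
  case: (classic (spans_aff_dir S E)) => [span | not_span]; try by exists E.
- have [e [eE_on _]] := orthonormal_extend E_on S_E not_span.
  by have := leq_trans (orthonormal_size eE_on) le_n; rewrite /= addn0 ltnn.
- have [e [eE_on S_e]] := orthonormal_extend E_on S_E not_span.
  by apply: (IH (e :: E)) => //=; [rewrite addSnnS | constructor].
Qed.

Lemma is_proj_aff_hull_perp S x p : is_proj (aff_hull S) x p -> perp S (vsub x p).
Proof.
move=> x_p a b Sa Sb.
have dir_le a' b' : S a' -> S b' -> inner (vsub x p) (vsub a' b') <= 0.
  move=> Sa' Sb'; apply: (is_proj_dir x_p) => t _.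
  exact: aff_hull_add_dir (proj1 x_p) Sa' Sb'.
have := dir_le _ _ Sb Sa; rewrite (_ : vsub b a = vscale (-1) (vsub a b)); last vec_ring.
by rewrite inner_scaler; have := dir_le _ _ Sa Sb; lra.
Qed.

Lemma aff_hull_proj_exists S x : is_nonempty S -> exists p, is_proj (aff_hull S) x p.
Proof.
move=> S_ne; have [s0 Ss0] := S_ne.
have [E [E_on [S_E E_span]]] := aff_dir_orthonormal_basis S.
pose p := vadd s0 (span_proj E (vsub x s0)).
have Lp : aff_hull S p.
  rewrite (_ : p = vadd s0 (vscale 1 (span_proj E (vsub x s0)))); last by rewrite /p; vec_ring.
  exact/aff_dir_span_proj/aff_hull_sub.
have xp_orth : Forall (fun e => inner (vsub x p) e = 0) E.
  apply/Forall_forall => e E_e.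
  rewrite (_ : vsub x p = vsub (vsub x s0) (span_proj E (vsub x s0))); last by rewrite /p; vec_ring.
  by rewrite inner_subl (inner_sym (span_proj E _)) inner_span_proj_mem //; ring.
have S_perp : perp S (vsub x p).
  move=> a b Sa Sb; rewrite (E_span (vsub a b)); last exact: aff_dir_sub_points.
  exact: span_proj_orth.
exists p; apply: (is_proj_of_var Lp) => l Ll.
by rewrite (perp_aff_hull S_ne S_perp Ll Lp); lra.
Qed.

End AffineHull.

Section DouglasRachford.
Context {n : nat}.
Implicit Types (x y z c u v s : vec n) (S C A B : vset n).

Lemma is_closed_inter A B : is_closed A -> is_closed B -> is_closed (set_inter A B).
Proof.
move=> A_cl B_cl x near_x; split; [apply: A_cl | apply: B_cl] => e /near_x [y [[Ay By] xy]].
  by exists y.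
by exists y.
Qed.

Lemma is_convex_inter A B : is_convex A -> is_convex B -> is_convex (set_inter A B).
Proof. by move=> A_cvx B_cvx x y t [Ax Bx] [Ay By] t01; split; [apply: A_cvx | apply: B_cvx]. Qed.

Lemma proj_spec S x : is_nonempty S -> is_closed S -> is_convex S ->
  S (proj S x) /\ forall s, S s -> inner (vsub x (proj S x)) (vsub s (proj S x)) <= 0.
Proof.
move=> S_ne S_cl S_cvx; have x_p := is_proj_proj (proj_exists x S_ne S_cl S_cvx).
by split; [case: x_p | exact: is_proj_var x_p].
Qed.

Lemma proj_add_perp S x u : is_nonempty S -> is_closed S -> is_convex S ->
  perp S u -> proj S (vadd x u) = proj S x.
Proof.
move=> S_ne S_cl S_cvx S_u; have [Sp var_p] := proj_spec x S_ne S_cl S_cvx.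
apply: (proj_unique S_cvx); apply: (is_proj_of_var Sp) => s Ss.
rewrite (_ : vsub (vadd x u) _ = vadd (vsub x (proj S x)) u); last vec_ring.
by rewrite inner_addl (S_u _ _ Ss Sp); have := var_p s Ss; lra.
Qed.

Lemma proj_id S c : is_convex S -> S c -> proj S c = c.
Proof.
move=> S_cvx Sc; apply: (proj_unique S_cvx); apply: (is_proj_of_var Sc) => s _.
by rewrite (_ : vsub c c = vzero) ?inner0l; [lra | vec_ring].
Qed.

Lemma rel_int_var S z v :
  rel_int S z -> (forall s, S s -> inner v (vsub s z) <= 0) ->
  forall s, S s -> inner v (vsub s z) = 0.
Proof.
(* z + t (z - s) stays in aff S and, for small t, in S: this gives the reverse inequality. *)
move=> [Sz [eps [eps_gt0 ri_z]]] var s Ss.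
pose N := vnorm (vsub z s); pose t := eps / (N + 1).
have N_ge0 : 0 <= N := sqrt_pos _.
have t_gt0 : 0 < t by apply: Rdiv_lt_0_compat; lra.
have S_y : S (vadd z (vscale t (vsub z s))).
  apply: ri_z; first exact: aff_hull_add_dir (aff_hull_sub Sz) Sz Ss.
  rewrite (_ : vsub _ z = vscale t (vsub z s)); last vec_ring.
  rewrite vnorm_scale Rabs_pos_eq -/N; last lra.
  by rewrite /t; apply: (Rmult_lt_reg_r (N + 1)); [lra | field_simplify; nra].
have := var _ S_y; rewrite (_ : vsub _ z = vscale (- t) (vsub s z)) ?inner_scaler; last vec_ring.
by have := var s Ss; nra.
Qed.

(* C + (L - L)^perp with L = aff S; Fix T is of this form. *)
Definition plus_perp C S : vset n :=
  fun y => exists c u, C c /\ perp S u /\ y = vadd c u.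

Lemma is_convex_plus_perp C S : is_convex C -> is_convex (plus_perp C S).
Proof.
move=> C_cvx _ _ t [c1 [u1 [Cc1 [Su1 ->]]]] [c2 [u2 [Cc2 [Su2 ->]]]] t01.
exists (vadd (vscale t c1) (vscale (1 - t) c2)), (vadd (vscale t u1) (vscale (1 - t) u2)).
by split; [exact: C_cvx | split; [exact: perp_lin | vec_ring]].
Qed.

Lemma is_proj_plus_perp C S x q c :
  is_nonempty S -> (forall c', C c' -> aff_hull S c') ->
  is_proj (aff_hull S) x q -> is_proj C q c ->
  is_proj (plus_perp C S) x (vadd (vsub x q) c).
Proof.
move=> S_ne C_sub x_q [Cc c_min]; have S_xq := is_proj_aff_hull_perp x_q.
split; first by exists c, (vsub x q); split; [|split; [|vec_ring]].
move=> _ [c' [u' [Cc' [Su' ->]]]]; apply/vnorm_le_sq.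
rewrite (_ : vsub x (vadd (vsub x q) c) = vsub q c); last vec_ring.
rewrite (_ : vsub x (vadd c' u') = vadd (vsub q c') (vsub (vsub x q) u')); last vec_ring.
have orth : inner (vsub (vsub x q) u') (vsub q c') = 0.
  exact: perp_aff_hull S_ne (perp_sub S_xq Su') _ _ (proj1 x_q) (C_sub _ Cc').
rewrite inner_add_add inner_sym orth; have /vnorm_le_sq := c_min _ Cc'.
by have := inner_ge0 (vsub (vsub x q) u'); lra.
Qed.

Section Operator.
Variables A B : vset n.
Hypotheses (A_ne : is_nonempty A) (A_cl : is_closed A) (A_cvx : is_convex A).
Hypotheses (B_ne : is_nonempty B) (B_cl : is_closed B) (B_cvx : is_convex B).

Lemma DR_op_add_perp y u :
  perp (set_union A B) u -> DR_op A B (vadd y u) = vadd (DR_op A B y) u.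
Proof.
move=> AB_u; rewrite /DR_op.
have PA_u : proj A (vadd y u) = proj A y by apply: proj_add_perp (perp_union_l AB_u).
have -> : refl A (vadd y u) = vadd (refl A y) (vopp u) by rewrite /refl PA_u; vec_ring.
rewrite proj_add_perp //; last exact/perp_opp/(perp_union_r AB_u).
by rewrite PA_u; vec_ring.
Qed.

Lemma iter_DR_op_add_perp k y u :
  perp (set_union A B) u ->
  iter_fun k (DR_op A B) (vadd y u) = vadd (iter_fun k (DR_op A B) y) u.
Proof. by move=> AB_u; elim: k => //= k IH; rewrite IH DR_op_add_perp. Qed.

Lemma Fix_DR_op_plus_perp x :
  plus_perp (set_inter A B) (set_union A B) x -> Fix (DR_op A B) x.
Proof.
move=> [c [u [[Ac Bc] [AB_u ->]]]].
rewrite /Fix DR_op_add_perp // /DR_op /refl (proj_id A_cvx Ac).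
by rewrite (_ : vsub (vscale 2 c) c = c) ?(proj_id B_cvx Bc); vec_ring.
Qed.

Lemma plus_perp_Fix_DR_op z x :
  rel_int A z -> rel_int B z -> Fix (DR_op A B) x ->
  plus_perp (set_inter A B) (set_union A B) x.
Proof.
move=> riA_z riB_z x_fix; pose a := proj A x; pose u := vsub x a.
have [Aa var_A] := proj_spec x A_ne A_cl A_cvx.
have [Ba var_B] := proj_spec (refl A x) B_ne B_cl B_cvx.
have PB_a : proj B (refl A x) = a.
  apply: vec_ext => i; have := f_equal (fun v => v i) x_fix.
  by rewrite /DR_op /vsub /vadd -/a; lra.
have RA_a : vsub (refl A x) a = vopp u by rewrite /refl /u -/a; vec_ring.
rewrite PB_a RA_a in Ba var_B.
have uz0 : inner u (vsub z a) = 0.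
  have := var_A z (proj1 riA_z); have := var_B z (proj1 riB_z).
  by rewrite inner_oppl -/a -/u; lra.
have var_shift s : inner u (vsub s z) = inner u (vsub s a).
  rewrite (_ : vsub s z = vsub (vsub s a) (vsub z a)); last vec_ring.
  by rewrite inner_subr uz0; ring.
have A_u : forall s, A s -> inner u (vsub s z) = 0.
  by apply: rel_int_var riA_z _ => s As; rewrite var_shift; exact: var_A.
have B_u : forall s, B s -> inner (vopp u) (vsub s z) = 0.
  apply: rel_int_var riB_z _ => s Bs.
  by rewrite !inner_oppl var_shift -inner_oppl; exact: var_B.
have U_u s : set_union A B s -> inner u (vsub s z) = 0.
  by case=> [/A_u | /B_u]; rewrite ?inner_oppl; lra.
exists a, u; split; first by [].
split; last by rewrite /u; vec_ring.
move=> p q Up Uq; rewrite (_ : vsub p q = vsub (vsub p z) (vsub q z)); last vec_ring.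
by rewrite inner_subr U_u // U_u //; ring.
Qed.

Lemma Fix_DR_op z :
  rel_int A z -> rel_int B z ->
  Fix (DR_op A B) = plus_perp (set_inter A B) (set_union A B).
Proof.
move=> riA_z riB_z.
apply: functional_extensionality => x; apply: propositional_extensionality.
by split; [exact: plus_perp_Fix_DR_op riA_z riB_z | exact: Fix_DR_op_plus_perp].
Qed.

End Operator.
End DouglasRachford.

Theorem proposition4p1 (n : nat) (A B : vset n) :
  is_nonempty A -> is_closed A -> is_convex A ->
  is_nonempty B -> is_closed B -> is_convex B ->
  is_nonempty (set_inter A B) ->
  let L := aff_hull (set_union A B) in
  let T := DR_op A B in
  (forall (k : nat) (x : vec n),
      iter_fun k T x = vadd (vsub x (proj L x)) (iter_fun k T (proj L x))) /\
  (forall x : vec n, vsub x (T x) = vsub (proj L x) (T (proj L x))) /\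
  (is_nonempty (set_inter (rel_int A) (rel_int B)) ->
     (forall x : vec n,
        proj (Fix T) x = vadd (vsub x (proj L x)) (proj (set_inter A B) (proj L x))) /\
     (forall x : vec n, dist_fun (Fix T) x = dist_fun (set_inter A B) (proj L x))).
Proof.
move=> A_ne A_cl A_cvx B_ne B_cl B_cvx AB_ne L T.
have U_ne : is_nonempty (set_union A B) by case: A_ne => a Aa; exists a; left.
have L_proj x : is_proj L x (proj L x) := is_proj_proj (aff_hull_proj_exists x U_ne).
have L_perp x := is_proj_aff_hull_perp (L_proj x).
have decomp x : x = vadd (proj L x) (vsub x (proj L x)) by vec_ring.
split; [|split].
- move=> k x; rewrite /T {1}(decomp x).
  rewrite (iter_DR_op_add_perp A_ne A_cl A_cvx B_ne B_cl B_cvx k _ (L_perp x)).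
  by vec_ring.
- move=> x; rewrite /T {2}(decomp x).
  by rewrite (DR_op_add_perp A_ne A_cl A_cvx B_ne B_cl B_cvx _ (L_perp x)); vec_ring.
move=> [z [riA_z riB_z]].
have AB_cvx := is_convex_inter A_cvx B_cvx.
have AB_proj y := is_proj_proj (proj_exists y AB_ne (is_closed_inter A_cl B_cl) AB_cvx).
have Fix_T := Fix_DR_op A_ne A_cl A_cvx B_ne B_cl B_cvx riA_z riB_z.
have Fix_proj x :
    is_proj (Fix T) x (vadd (vsub x (proj L x)) (proj (set_inter A B) (proj L x))).
  rewrite /T Fix_T; apply: is_proj_plus_perp U_ne _ (L_proj x) (AB_proj _).
  by move=> c [Ac _]; apply: aff_hull_sub; left.
split=> x.
  by apply: proj_unique (Fix_proj x); rewrite /T Fix_T; exact: is_convex_plus_perp.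
rewrite (dist_fun_is_proj (Fix_proj x)) (dist_fun_is_proj (AB_proj _)).
by congr vnorm; vec_ring.
Qed.
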